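(* For any $F\in\mathscr{F}_1$ and $i\in[F]$: (i) $\mathcal{P}^2_{F,i}\supseteq\{0a,1b\}$ for some $a,b\in\mathcal{C}$; in particular $|\mathcal{P}^2_{F,i}|\ge2$. (ii) If $|\mathcal{P}^2_{F,i}|=2$, then (a) $|f_i(s)|\ge2$ for all $s\in\mathcal{S}$, and (b) $\mathcal{P}^2_{F,i}=\bar{\mathcal{P}}^2_{F,i}=\{0a,1b\}$ for some $a,b\in\mathcal{C}$. (iii) For any $s,s'\in\mathcal{S}$ with $s\ne s'$ and $f_i(s)=f_i(s')$, $|\mathcal{P}^2_{F,\tau_i(s)}|=|\mathcal{P}^2_{F,\tau_i(s')}|=2$. (iv) For any $s\in\mathcal{S}$, $|\mathcal{S}_{F,i}(f_i(s))|\le1$ if $\bar{\mathcal{P}}^0_{F,i}(f_i(s))\ne\emptyset$, and $|\mathcal{S}_{F,i}(f_i(s))|\le2$ if $\bar{\mathcal{P}}^0_{F,i}(f_i(s))=\emptyset$. (v) For any $s,s'\in\mathcal{S}$, $f_i(s')\ne f_i(s)0$ and $f_i(s')\ne f_i(s)1$. (vi) For any $s\in\mathcal{S}$, $|\bar{\mathcal{P}}^1_{F,i}(f_i(s)0)|\le1$ and $|\bar{\mathcal{P}}^1_{F,i}(f_i(s)1)|\le1$.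
   Context: $\mathcal{S}$ is a finite source alphabet with $|\mathcal{S}|\ge 2$ and $\mathcal{C}=\{0,1\}$; $\mathcal{A}^k,\mathcal{A}^{\ast},\mathcal{A}^{+}$ are sequences of length $k$, finite, positive finite length; $\lambda$ empty sequence; $\preceq$ prefix, $\prec$ proper prefix; $\mathrm{suff}(x_1\cdots x_n)=x_2\cdots x_n$. A code-tuple $F$ with $m\ge1$ code tables consists of maps $f_i:\mathcal{S}\to\mathcal{C}^{\ast}$ and $\tau_i:\mathcal{S}\to\{0,\dots,m-1\}$, $i\in[F]=\{0,\dots,m-1\}$. $f_i^{\ast}(\lambda)=\lambda$, $f_i^{\ast}(\pmb{x})=f_i(x_1)f^{\ast}_{\tau_i(x_1)}(\mathrm{suff}(\pmb{x}))$. $\mathcal{S}_{F,i}(\pmb{b})=\{s:f_i(s)=\pmb{b}\}$. For integer $k\ge0$, $\pmb{b}\in\mathcal{C}^{\ast}$: $\mathcal{P}^k_{F,i}(\pmb{b})$ is the set of $\pmb{c}\in\mathcal{C}^k$ such that some $\pmb{x}=x_1\cdots x_n\in\mathcal{S}^{+}$ has $f_i^{\ast}(\pmb{x})\succeq\pmb{b}\pmb{c}$ and $f_i(x_1)\succeq\pmb{b}$; $\bar{\mathcal{P}}^k_{F,i}(\pmb{b})$ the same with $f_i(x_1)\succ\pmb{b}$; $\mathcal{P}^k_{F,i}=\mathcal{P}^k_{F,i}(\lambda)$, $\bar{\mathcal{P}}^k_{F,i}=\bar{\mathcal{P}}^k_{F,i}(\lambda)$. $F\in\mathscr{F}_{2\text{-}\mathrm{dec}}$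 if $\mathcal{P}^2_{F,\tau_i(s)}\cap\bar{\mathcal{P}}^2_{F,i}(f_i(s))=\emptyset$ for all $i,s$, and $\mathcal{P}^2_{F,\tau_i(s)}\cap\mathcal{P}^2_{F,\tau_i(s')}=\emptyset$ whenever $s\ne s'$, $f_i(s)=f_i(s')$. Fix $\mu:\mathcal{S}\to(0,1]$ with $\sum_s\mu(s)=1$; $Q_{i,j}(F)=\sum_{s:\tau_i(s)=j}\mu(s)$; $F\in\mathscr{F}_{\mathrm{reg}}$ if $\pmb{\pi}Q(F)=\pmb{\pi}$, $\sum_i\pi_i=1$ has a unique solution. $\mathscr{F}_1=\{F\in\mathscr{F}_{\mathrm{reg}}\cap\mathscr{F}_{2\text{-}\mathrm{dec}}:\mathcal{P}^1_{F,i}=\{0,1\}\text{ for all }i\in[F]\}$. *)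

From HB Require Import structures.
From mathcomp Require Import all_boot all_order all_algebra.
From mathcomp Require Import boolp.
Set Implicit Arguments. Unset Strict Implicit. Unset Printing Implicit Defensive.
Import Order.TTheory GRing.Theory Num.Theory.

(* Code alphabet C = {0,1} is [bool] with 0 = false, 1 = true.
   A code-tuple with m code tables over source alphabet S. *)
Record code_tuple (S : finType) (m : nat) := CodeTuple {
  ct_f : 'I_m -> S -> seq bool;
  ct_tau : 'I_m -> S -> 'I_m }.

Section CodeTuple.
Variables (S : finType) (m : nat) (F : code_tuple S m).

Fixpoint fstar (i : 'I_m) (x : seq S) : seq bool :=
  match x with
  | [::] => [::]
  | a :: x' => ct_f F i a ++ fstar (ct_tau F i a) x'
  end.

Definition Pprop (i : 'I_m) (b c : seq bool) : Prop :=
  exists x : seq S, exists x1 : S, exists xs : seq S,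
    x = x1 :: xs /\ prefix (b ++ c) (fstar i x) /\ prefix b (ct_f F i x1).

Definition Pbarprop (i : 'I_m) (b c : seq bool) : Prop :=
  exists x : seq S, exists x1 : S, exists xs : seq S,
    x = x1 :: xs /\ prefix (b ++ c) (fstar i x) /\
    (prefix b (ct_f F i x1) && (b != ct_f F i x1)).

Definition Pset (k : nat) (i : 'I_m) (b : seq bool) : {set k.-tuple bool} :=
  [set c : k.-tuple bool | `[< Pprop i b c >]].

Definition Pbarset (k : nat) (i : 'I_m) (b : seq bool) : {set k.-tuple bool} :=
  [set c : k.-tuple bool | `[< Pbarprop i b c >]].

Definition Sset (i : 'I_m) (b : seq bool) : {set S} :=
  [set s | ct_f F i s == b].

Definition is_2dec : Prop :=
  (forall (i : 'I_m) (s : S),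
      Pset 2 (ct_tau F i s) [::] :&: Pbarset 2 i (ct_f F i s) = set0) /\
  (forall (i : 'I_m) (s s' : S), s != s' -> ct_f F i s = ct_f F i s' ->
      Pset 2 (ct_tau F i s) [::] :&: Pset 2 (ct_tau F i s') [::] = set0).

Local Open Scope ring_scope.
Definition Qmx (R : nzRingType) (mu : S -> R) : 'M[R]_m :=
  \matrix_(i < m, j < m) \sum_(s : S | ct_tau F i s == j) mu s.

Definition is_regular (R : nzRingType) (mu : S -> R) : Prop :=
  exists! pi : 'rV[R]_m, pi *m Qmx mu = pi /\ \sum_(i < m) pi 0 i = 1.

Definition in_F1 (R : nzRingType) (mu : S -> R) : Prop :=
  is_regular mu /\ is_2dec /\
  (forall i : 'I_m, Pset 1 i [::] = [set: 1.-tuple bool]).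

End CodeTuple.

From mathcomp Require Import all_boot all_order all_algebra.
From mathcomp Require Import boolp reals.
From mathcomp Require Import zify.

(* Because every state can emit either first bit, every state emits
   arbitrarily long outputs, so any prefix of an output extends by any number
   of bits; in particular each P^2_{F,j} contains some 0a and some 1b.  Two
   such sets that are disjoint, as 2-decodability demands for the next states
   of two symbols sharing a codeword, are therefore complementary halves of
   {0,1}^2: a third symbol with the same codeword has no room left, and no
   continuation strictly inside that codeword is possible.  The other clause
   forbids a codeword f_i(s)d, as well as both bits continuing f_i(s)d
   strictly inside a codeword, because the next state of s emits d followed
   by some bit.  When
   |P^2_{F,i}| = 2, an empty codeword would make the next state's set equal to
   P^2_{F,i} and force all codewords to be empty, contradicting the clause for
   two distinct symbols, while a one-bit codeword d would put both d0 and d1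
   into P^2_{F,i}. *)

Set Implicit Arguments. Unset Strict Implicit.

Lemma setI0_mem (T : finType) (A B : {set T}) x :
  A :&: B = set0 -> x \in A -> x \in B -> False.
Proof.
move=> AB0 xA xB; have : x \in A :&: B by rewrite inE xA xB.
by rewrite AB0 inE.
Qed.

Lemma disjoint_tuple2_halves (A B : {set 2.-tuple bool}) :
  A :&: B = set0 -> 1 < #|A| -> 1 < #|B| ->
  A :|: B = setT /\ #|A| = 2 /\ #|B| = 2.
Proof.
move=> AB0 hA hB.
have cardU : #|A :|: B| = #|A| + #|B| by rewrite cardsU AB0 cards0 subn0.
have le4 : #|A| + #|B| <= 4.
  by rewrite -cardU; have := max_card (A :|: B); rewrite card_tuple card_bool.
split; last by split; lia.
by apply/eqP; rewrite eqEcard subsetT cardsT card_tuple card_bool cardU; lia.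
Qed.

Lemma card_tuple2_ge3 (A : {set 2.-tuple bool}) d z :
  [tuple d; false] \in A -> [tuple d; true] \in A -> [tuple ~~ d; z] \in A ->
  2 < #|A|.
Proof.
move=> h0 h1 h2.
have : [set [tuple d; false]; [tuple d; true]; [tuple ~~ d; z]] \subset A.
  by apply/subsetP => x; rewrite !inE -orbA => /or3P[]/eqP->.
move/subset_leq_card; apply: leq_trans.
by case: d z {h0 h1 h2} => [] []; rewrite setUC !cardsU1 cards1 !inE.
Qed.

Section CodeTupleOutputs.
Variables (S : finType) (m : nat) (F : code_tuple S m).

Fixpoint tau_star (i : 'I_m) (x : seq S) : 'I_m :=
  if x is a :: x' then tau_star (ct_tau F i a) x' else i.

Lemma fstar_cat i x y :
  fstar F i (x ++ y) = fstar F i x ++ fstar F (tau_star i x) y.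
Proof. by elim: x i => [|a x IH] i //=; rewrite IH catA. Qed.

Lemma PsetP k i b (c : k.-tuple bool) :
  reflect (Pprop F i b c) (c \in Pset F k i b).
Proof. by rewrite inE; apply: asboolP. Qed.

Lemma PbarsetP k i b (c : k.-tuple bool) :
  reflect (Pbarprop F i b c) (c \in Pbarset F k i b).
Proof. by rewrite inE; apply: asboolP. Qed.

Lemma Pbarprop_Pprop i b c : Pbarprop F i b c -> Pprop F i b c.
Proof. by move=> [x [x1 [xs [-> [hp /andP[hb _]]]]]]; exists (x1 :: xs), x1, xs. Qed.

Lemma Pbarset_sub k i b : Pbarset F k i b \subset Pset F k i b.
Proof. by apply/subsetP => c /PbarsetP/Pbarprop_Pprop/PsetP. Qed.

Lemma Pbarprop_rcons i b d e :
  Pbarprop F i (rcons b d) [:: e] -> Pbarprop F i b [:: d; e].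
Proof.
move=> [x [x1 [xs [-> [hp /andP [hb _]]]]]].
exists (x1 :: xs), x1, xs; split => //; split; first by rewrite -cat_rcons.
rewrite (prefix_trans (prefix_rcons b d) hb) /=.
by apply/eqP => eb; move: hb; rewrite -eb => /size_prefix; rewrite size_rcons ltnn.
Qed.

Hypothesis P1_full : forall j, Pset F 1 j [::] = [set: 1.-tuple bool].

Lemma fstar_nonempty j : exists y, 0 < size (fstar F j y).
Proof.
have /PsetP [_ [x1 [xs [-> [hp _]]]]] : [tuple false] \in Pset F 1 j [::].
  by rewrite P1_full inE.
by exists (x1 :: xs); apply: leq_trans (size_prefix hp).
Qed.

Lemma fstar_long n j : exists y, n <= size (fstar F j y).
Proof.
elim: n j => [|n IH] j; first by exists [::].
have [y hy] := IH j; have [z hz] := fstar_nonempty (tau_star j y).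
by exists (y ++ z); rewrite fstar_cat size_cat; lia.
Qed.

Lemma prefix_fstar_extend k j x1 xs p : prefix p (fstar F j (x1 :: xs)) ->
  exists ys (c : k.-tuple bool), prefix (p ++ c) (fstar F j (x1 :: ys)).
Proof.
move=> /prefixP [r def_p].
have [y hy] := fstar_long (size p + k) (tau_star j (x1 :: xs)).
set q := r ++ fstar F (tau_star j (x1 :: xs)) y.
have def_q : fstar F j (x1 :: xs ++ y) = p ++ q.
  by rewrite -cat_cons fstar_cat def_p catA.
have size_q : size (take k q) == k.
  rewrite size_takel // /q size_cat.
  exact: leq_trans (leq_addl (size p) k) (leq_trans hy (leq_addl _ _)).
exists (xs ++ y), (Tuple size_q).
by rewrite def_q prefix_catr // eqxx prefix_take.
Qed.

Lemma Pprop_first_bit j d : exists e, Pprop F j [::] [:: d; e].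
Proof.
have /PsetP [_ [x1 [xs [-> [hp _]]]]] : [tuple d] \in Pset F 1 j [::].
  by rewrite P1_full inE.
have [ys [[[|e [|? ?]] //= _] hc]] := prefix_fstar_extend 1 hp.
by exists e, (x1 :: ys), x1, ys; rewrite prefix0s.
Qed.

Lemma Pset2_first_bits j : exists a b,
  [tuple false; a] \in Pset F 2 j [::] /\ [tuple true; b] \in Pset F 2 j [::].
Proof.
have [a ha] := Pprop_first_bit j false; have [b hb] := Pprop_first_bit j true.
by exists a, b; split; apply/PsetP.
Qed.

Lemma card_Pset2_ge2 j : 1 < #|Pset F 2 j [::]|.
Proof.
have [a [b [ha hb]]] := Pset2_first_bits j.
by apply/card_gt1P; exists ([tuple false; a]), ([tuple true; b]).
Qed.

Lemma Pset2_card2_pair j : #|Pset F 2 j [::]| = 2 ->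
  exists a b, Pset F 2 j [::] = [set [tuple false; a]; [tuple true; b]].
Proof.
move=> card2; have [a [b [ha hb]]] := Pset2_first_bits j.
exists a, b; apply/esym/eqP; rewrite eqEcard card2 cards2 /= andbT.
by apply/subsetP => c; rewrite in_set2 => /orP[]/eqP->.
Qed.

Lemma fstar_codeword_prefix i s c : Pprop F (ct_tau F i s) [::] c ->
  exists xs, prefix (ct_f F i s ++ c) (fstar F i (s :: xs)).
Proof.
by move=> [_ [x1 [xs [-> [hp _]]]]]; exists (x1 :: xs); rewrite /= prefix_catr // eqxx.
Qed.

Lemma Pbarset0_extend k i b : Pbarset F 0 i b != set0 -> Pbarset F k i b != set0.
Proof.
move=> /set0Pn [_ /PbarsetP [_ [x1 [xs [-> [_ /[dup] hb /andP [hpre _]]]]]]].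
have [ys [c hc]] :=
  prefix_fstar_extend k (prefix_catl (fstar F (ct_tau F i x1) xs) hpre).
by apply/set0Pn; exists c; apply/PbarsetP; exists (x1 :: ys), x1, ys.
Qed.

Lemma Pbarset2_nil_nonempty i s : ct_f F i s != [::] -> Pbarset F 2 i [::] != set0.
Proof.
move=> fs; have [ys [c hc]] := prefix_fstar_extend 2 (prefix0s (fstar F i [:: s])).
apply/set0Pn; exists c; apply/PbarsetP.
by exists (s :: ys), s, ys; rewrite prefix0s eq_sym.
Qed.

Hypothesis dec_next : forall i s,
  Pset F 2 (ct_tau F i s) [::] :&: Pbarset F 2 i (ct_f F i s) = set0.
Hypothesis dec_twins : forall i s s', s != s' -> ct_f F i s = ct_f F i s' ->
  Pset F 2 (ct_tau F i s) [::] :&: Pset F 2 (ct_tau F i s') [::] = set0.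

Lemma Pset2_twins_halves i s s' : s != s' -> ct_f F i s = ct_f F i s' ->
  Pset F 2 (ct_tau F i s) [::] :|: Pset F 2 (ct_tau F i s') [::] = setT /\
  #|Pset F 2 (ct_tau F i s) [::]| = 2 /\ #|Pset F 2 (ct_tau F i s') [::]| = 2.
Proof.
move=> ss' fss'; apply: disjoint_tuple2_halves; first exact: dec_twins.
all: exact: card_Pset2_ge2.
Qed.

Lemma Pset2_twins_cover i s s' c : s != s' -> ct_f F i s = ct_f F i s' ->
  (c \in Pset F 2 (ct_tau F i s) [::]) || (c \in Pset F 2 (ct_tau F i s') [::]).
Proof.
move=> ss' fss'; have [cover _] := Pset2_twins_halves ss' fss'.
by rewrite -in_setU cover inE.
Qed.

Lemma card_Sset_le1 i b : Pbarset F 0 i b != set0 -> #|Sset F i b| <= 1.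
Proof.
move=> /(Pbarset0_extend 2) /set0Pn [c hc].
rewrite leqNgt; apply/card_gt1P => -[s1 [s2 [+ + s12]]].
rewrite !inE => /eqP f1 /eqP f2.
have /orP [] := Pset2_twins_cover c s12 (etrans f1 (esym f2)) => h.
- by apply: (setI0_mem (dec_next i s1) h); rewrite f1.
- by apply: (setI0_mem (dec_next i s2) h); rewrite f2.
Qed.

Lemma card_Sset_le2 i b : #|Sset F i b| <= 2.
Proof.
rewrite leqNgt; apply/card_gt2P => -[s1 [s2 [s3 [[+ + +] [s12 s23 s31]]]]].
rewrite !inE => /eqP f1 /eqP f2 /eqP f3.
have /card_gt0P [c hc] := ltnW (card_Pset2_ge2 (ct_tau F i s3)).
have /orP [] := Pset2_twins_cover c s12 (etrans f1 (esym f2)) => h.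
- exact: (setI0_mem (dec_twins s31 (etrans f3 (esym f1))) hc h).
- exact: (setI0_mem (dec_twins s23 (etrans f2 (esym f3))) h hc).
Qed.

Lemma not_Pbarprop_codeword_all i s d :
  ~ (forall e, Pbarprop F i (ct_f F i s) [:: d; e]).
Proof.
move=> hall; have [e he] := Pprop_first_bit (ct_tau F i s) d.
apply: (setI0_mem (dec_next i s) (x := [tuple d; e])); first exact/PsetP.
exact/PbarsetP/hall.
Qed.

Lemma codeword_neq_rcons i s s' d : ct_f F i s' != rcons (ct_f F i s) d.
Proof.
apply/eqP => fs'; apply: (@not_Pbarprop_codeword_all i s d) => e.
have [e' /fstar_codeword_prefix [xs hp]] := Pprop_first_bit (ct_tau F i s') e.
exists (s' :: xs), s', xs; split => //; split.
  by apply: (catl_prefix (s3 := [:: e'])); rewrite -catA /= -cat_rcons -fs'.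
by rewrite fs' prefix_rcons; apply/eqP => /(congr1 size); rewrite size_rcons => /n_Sn.
Qed.

Lemma card_Pbarset1_rcons_le1 i s d : #|Pbarset F 1 i (rcons (ct_f F i s) d)| <= 1.
Proof.
rewrite leqNgt; apply/card_gt1P => -[c1 [c2 [/PbarsetP h1 /PbarsetP h2 c12]]].
apply: (@not_Pbarprop_codeword_all i s d) => e; apply: Pbarprop_rcons.
case: c1 c2 h1 h2 c12 => [[|e1 [|]] //= ?] [[|e2 [|]] //= ?] h1 h2.
rewrite -val_eqE /= eqseq_cons andbT.
by case: e e1 e2 h1 h2 => [] [] [].
Qed.

Lemma Pset2_next_nil i s : ct_f F i s = [::] ->
  Pset F 2 (ct_tau F i s) [::] \subset Pset F 2 i [::].
Proof.
move=> fs0; apply/subsetP => c /PsetP /fstar_codeword_prefix [xs].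
rewrite fs0 => hp.
by apply/PsetP; exists (s :: xs), s, xs; rewrite prefix0s.
Qed.

Lemma Pset2_next_nil_eq i s : #|Pset F 2 i [::]| = 2 -> ct_f F i s = [::] ->
  Pset F 2 (ct_tau F i s) [::] = Pset F 2 i [::].
Proof.
move=> card2 fs0; apply/eqP; rewrite eqEcard Pset2_next_nil //= card2.
exact: card_Pset2_ge2.
Qed.

Lemma all_codewords_nil i s : #|Pset F 2 i [::]| = 2 -> ct_f F i s = [::] ->
  forall s', ct_f F i s' = [::].
Proof.
move=> card2 fs0 s'; apply/eqP/negPn/negP.
move=> /Pbarset2_nil_nonempty /set0Pn [c hc].
apply: (setI0_mem (dec_next i s) (x := c)); last by rewrite fs0.
by rewrite Pset2_next_nil_eq // (subsetP (Pbarset_sub _ _ _)).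
Qed.

Hypothesis S_nontrivial : 1 < #|S|.

Lemma codeword_nonnil i s : #|Pset F 2 i [::]| = 2 -> ct_f F i s != [::].
Proof.
move=> card2; apply/eqP => fs0.
have [s0 [s1 [_ _ s01]]] := card_gt1P S_nontrivial.
have f0 := all_codewords_nil card2 fs0 s0; have f1 := all_codewords_nil card2 fs0 s1.
have := dec_twins s01 (etrans f0 (esym f1)).
by rewrite !Pset2_next_nil_eq // setIid => P0; move: card2; rewrite P0 cards0.
Qed.

Lemma codeword_size_neq1 i s : #|Pset F 2 i [::]| = 2 -> size (ct_f F i s) != 1.
Proof.
move=> card2; case fs: (ct_f F i s) => [|d [|//]] //.
have lift e e' : [tuple e; e'] \in Pset F 2 (ct_tau F i s) [::] ->
    [tuple d; e] \in Pset F 2 i [::].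
  move=> /PsetP /fstar_codeword_prefix [xs]; rewrite fs => hp.
  apply/PsetP; exists (s :: xs), s, xs; split => //; split; last exact: prefix0s.
  by apply: prefix_trans hp; rewrite /= !eqxx.
have [a [b [ha hb]]] := Pset2_first_bits (ct_tau F i s).
have [z /PsetP hz] := Pprop_first_bit i (~~ d).
by have := card_tuple2_ge3 (lift _ _ ha) (lift _ _ hb) hz; rewrite card2.
Qed.

Lemma size_codeword_ge2 i :
  #|Pset F 2 i [::]| = 2 -> forall s, 1 < size (ct_f F i s).
Proof.
move=> card2 s; have := codeword_nonnil s card2; have := codeword_size_neq1 s card2.
by case: (ct_f F i s) => [|? []].
Qed.

Lemma Pbarset2_nil_eq i :
  #|Pset F 2 i [::]| = 2 -> Pbarset F 2 i [::] = Pset F 2 i [::].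
Proof.
move=> card2; apply/eqP; rewrite eqEsubset Pbarset_sub /=.
apply/subsetP => c /PsetP [_ [x1 [xs [-> [hp _]]]]].
apply/PbarsetP; exists (x1 :: xs), x1, xs; split => //; split => //.
by rewrite prefix0s eq_sym -size_eq0 -lt0n ltnW // size_codeword_ge2.
Qed.

End CodeTupleOutputs.

Unset Implicit Arguments. Set Strict Implicit.

Theorem lemma14 (R : realType) (S : finType) (mu : S -> R)
  (hS : (2 <= #|S|)%N)
  (hmu_pos : forall s, (0 < mu s)%R /\ (mu s <= 1)%R)
  (hmu_sum : (\sum_(s : S) mu s)%R = 1%R)
  (m : nat) (hm : (1 <= m)%N) (F : code_tuple S m)
  (hF : in_F1 F mu) (i : 'I_m) :
  (* (i) *)
  ((exists a b : bool,
      [tuple false; a] \in Pset F 2 i [::] /\ [tuple true; b] \in Pset F 2 i [::])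
   /\ (2 <= #|Pset F 2 i [::]|)%N)
  (* (ii) *)
  /\ (#|Pset F 2 i [::]| = 2 ->
        (forall s : S, (2 <= size (ct_f F i s))%N) /\
        (exists a b : bool,
           Pset F 2 i [::] = [set [tuple false; a]; [tuple true; b]] /\
           Pbarset F 2 i [::] = [set [tuple false; a]; [tuple true; b]]))
  (* (iii) *)
  /\ (forall s s' : S, s != s' -> ct_f F i s = ct_f F i s' ->
        #|Pset F 2 (ct_tau F i s) [::]| = 2 /\ #|Pset F 2 (ct_tau F i s') [::]| = 2)
  (* (iv) *)
  /\ (forall s : S,
        (Pbarset F 0 i (ct_f F i s) != set0 -> (#|Sset F i (ct_f F i s)| <= 1)%N) /\
        (Pbarset F 0 i (ct_f F i s) = set0 -> (#|Sset F i (ct_f F i s)| <= 2)%N))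
  (* (v) *)
  /\ (forall s s' : S,
        ct_f F i s' != rcons (ct_f F i s) false /\ ct_f F i s' != rcons (ct_f F i s) true)
  (* (vi) *)
  /\ (forall s : S,
        (#|Pbarset F 1 i (rcons (ct_f F i s) false)| <= 1)%N /\
        (#|Pbarset F 1 i (rcons (ct_f F i s) true)| <= 1)%N).
Proof.
have [_ [[dec_next dec_twins] P1_full]] := hF.
split; first by split; [exact: Pset2_first_bits | exact: card_Pset2_ge2].
split.
  move=> card2; split; first exact: (size_codeword_ge2 P1_full dec_next dec_twins hS).
  have [a [b def_P]] := Pset2_card2_pair P1_full card2.
  by exists a, b; rewrite (Pbarset2_nil_eq P1_full dec_next dec_twins hS).
split.
  by move=> s s' ss' fss'; have [_] := Pset2_twins_halves P1_full dec_twins ss' fss'.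
split.
  move=> s; split=> [|_]; first exact: (card_Sset_le1 P1_full dec_next dec_twins).
  exact: (card_Sset_le2 P1_full dec_twins).
split; first by move=> s s'; split; exact: (codeword_neq_rcons P1_full dec_next).
by move=> s; split; exact: (card_Pbarset1_rcons_le1 P1_full dec_next).
Qed.
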